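(* Let $(\alpha_n)_{n\ge0}$ be complex numbers with $|\alpha_n|<1$ and let $\mu_{n,r,s}$ be as in the context. For all nonnegative integers $n,r,s$, \[ \mu_{n,r,s}=\sum_{p\in\mathrm{gMot}((-r,r)\to(2n-s,s))}\mathrm{wt}_M(p). \]
   Context: For a polynomial $f(z)=\sum_{k=0}^n a_kz^k$ of degree $n$, write $\overline{f}(z)=\sum_k\overline{a_k}z^k$ and $f^*(z)=z^n\overline{f}(1/z)$. Define monic $\Phi_n$ by $\Phi_0=1$, $\Phi_{n+1}(z)=z\Phi_n(z)-\overline{\alpha_n}\Phi_n^*(z)$. Let $\mathcal{L}$ be the unique linear functional on Laurent polynomials with $\mathcal{L}(1)=1$ and $\mathcal{L}(\Phi_m(z)\overline{\Phi_n}(1/z))=0$ for $m\neq n$; set $\langle f,g\rangle=\mathcal{L}(f(z)\overline{g}(1/z))$ and $\mu_{n,r,s}=\langle\Phi_s(z),z^n\Phi_r(z)\rangle/\langle\Phi_s,\Phi_s\rangle$. Set $\alpha_{-1}=-1$. A gentle Motzkin path is a lattice path in $\mathbb{Z}\times\mathbb{Z}_{\ge0}$ with steps $(1,1)$, $(1,0)$, $(1,-1)$ such that an up-step $(a,b)\to(a+1,b+1)$ occurs only when $a+b$ is even and a down-step $(a,b)\to(a+1,b-1)$ occurs only when $a+b$ is odd. $\mathrm{gMot}((a,b)\to(c,d))$ denotes the set of gentle Motzkin paths from $(a,b)$ to $(c,d)$. The weight $\mathrm{wt}_M(p)$ is the product of step weights: up-step weight $1$; down-step $(a,b)\to(a+1,b-1)$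 weight $1-|\alpha_{b-1}|^2$; horizontal step $(a,b)\to(a+1,b)$ weight $\alpha_b$ if $a+b$ is even and $-\overline{\alpha_{b-1}}$ if $a+b$ is odd. *)

From HB Require Import structures.
From mathcomp Require Import all_boot all_order all_algebra.
From mathcomp Require Import complex.
Set Implicit Arguments. Unset Strict Implicit. Unset Printing Implicit Defensive.
Import Order.TTheory GRing.Theory Num.Theory.
Local Open Scope ring_scope.

Section OPUC.
Variable R : rcfType.
Notation C := (R[i]).

(* f^*(z) = z^n \bar f(1/z), n = deg f = (size f).-1 *)
Definition pstar (f : {poly C}) : {poly C} :=
  \poly_(i < size f) ((f`_((size f).-1 - i))^*).

Fixpoint Phi (alpha : nat -> C) (n : nat) : {poly C} :=
  match n with
  | 0 => 1
  | m.+1 => 'X * Phi alpha m - (alpha m)^* *: pstar (Phi alpha m)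
  end.

(* A linear functional L on Laurent polynomials is represented by its values
   c k = L(z^k), k : int, so that L (sum_k a_k z^k) = sum_k a_k c k. *)
(* <f,g> = L(f(z) \bar g(1/z)) *)
Definition ip (c : int -> C) (f g : {poly C}) : C :=
  \sum_(i < size f) \sum_(j < size g) f`_i * (g`_j)^* * c (i%:Z - j%:Z).

Definition mu (alpha : nat -> C) (c : int -> C) (n r s : nat) : C :=
  ip c (Phi alpha s) ('X^n * Phi alpha r) / ip c (Phi alpha s) (Phi alpha s).

Definition aext (alpha : nat -> C) (k : int) : C :=
  match k with Posz m => alpha m | Negz _ => -1 end.

End OPUC.

Inductive step := Up | Flat | Down.

Definition step_to (s : step) : 'I_3 :=
  match s with Up => inord 0 | Flat => inord 1 | Down => inord 2 end.
Definition step_of (i : 'I_3) : step :=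
  match val i with 0 => Up | 1 => Flat | _ => Down end.
Lemma step_toK : cancel step_to step_of.
Proof. by case; rewrite /step_of /= inordK. Qed.

HB.instance Definition _ := Finite.copy step (can_type step_toK).

(* A path is a start point (x,y) and a sequence of steps.
   gentle x y ss: the path stays in Z x Z_{>=0}, up-steps (a,b)->(a+1,b+1)
   only when a+b is even, down-steps (a,b)->(a+1,b-1) only when a+b odd. *)
Fixpoint gentle_from (x y : int) (ss : seq step) : bool :=
  match ss with
  | [::] => true
  | Up :: ss' => ~~ odd (absz (x + y)) && gentle_from (x + 1) (y + 1) ss'
  | Flat :: ss' => gentle_from (x + 1) y ss'
  | Down :: ss' => odd (absz (x + y)) && (0 < y) && gentle_from (x + 1) (y - 1) ss'
  end.

Definition gentle (x y : int) (ss : seq step) : bool :=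
  (0 <= y) && gentle_from x y ss.

Fixpoint endpt (x y : int) (ss : seq step) : int * int :=
  match ss with
  | [::] => (x, y)
  | Up :: ss' => endpt (x + 1) (y + 1) ss'
  | Flat :: ss' => endpt (x + 1) y ss'
  | Down :: ss' => endpt (x + 1) (y - 1) ss'
  end.

Fixpoint wtM (R : rcfType) (alpha : nat -> R[i]) (x y : int) (ss : seq step)
  : R[i] :=
  match ss with
  | [::] => 1
  | Up :: ss' => wtM alpha (x + 1) (y + 1) ss'
  | Flat :: ss' =>
      (if ~~ odd (absz (x + y)) then aext alpha y else - (aext alpha (y - 1))^*)
      * wtM alpha (x + 1) y ss'
  | Down :: ss' =>
      (1 - `|aext alpha (y - 1)| ^+ 2) * wtM alpha (x + 1) (y - 1) ss'
  end.

(* Every such path has exactly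
   c - a steps, so it suffices to range over step tuples of length |c - a|
   (when c < a no tuple ends at x-coordinate c, so the sum is empty). *)
Definition gMot_sum (R : rcfType) (alpha : nat -> R[i]) (a b c d : int) : R[i] :=
  \sum_(t : (absz (c - a)).-tuple step | gentle a b t && (endpt a b t == (c, d)))
     wtM alpha a b t.

From HB Require Import structures.
From mathcomp Require Import all_boot all_order all_algebra.
From mathcomp Require Import complex.
From mathcomp Require Import zify ring.
Set Implicit Arguments. Unset Strict Implicit. Unset Printing Implicit Defensive.
Import Order.TTheory GRing.Theory Num.Theory.
Local Open Scope ring_scope.

(* Attach to the lattice point (x, y), x + y = l <= 2n, the polynomial
   z^(n - l/2) Phi_y if l is even and z^(n - (l+1)/2) Phi_y^* if l is odd.
   The Szego recursion z Phi_y = Phi_(y+1) + conj(alpha_y) Phi_y^* and its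
   companion Phi_(y+1)^* = (1 - |alpha_y|^2) Phi_y^* - alpha_y Phi_(y+1)
   write this polynomial as the combination of the polynomials at the gentle
   successors of (x, y), with the conjugates of the step weights as
   coefficients.  On the antidiagonal x + y = 2n the polynomial is Phi_y, so
   the Phi_s-coefficient of z^n Phi_r (the point (-r, r)) is the conjugated
   weighted count of gentle paths from (-r, r) to (2n - s, s).  Pairing with
   Phi_s extracts it, times <Phi_s, Phi_s> = prod_(k<s) (1 - |alpha_k|^2) != 0. *)

Lemma step_ofK : cancel step_of step_to.
Proof. by case=> [[|[|[|i]]] Hi] //; apply/val_inj; rewrite /= inordK. Qed.

Lemma big_step (V : nmodType) (F : step -> V) :
  \sum_(h : step) F h = F Up + F Flat + F Down.
Proof.
rewrite (reindex step_of); last by exists step_to => h _; [exact: step_ofK | exact: step_toK].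
by rewrite !big_ord_recr big_ord0 /= add0r.
Qed.

Lemma endpt_fst (t : seq step) (x y : int) : (endpt x y t).1 = x + (size t)%:Z.
Proof.
elim: t x y => [|h t IH] x y /=; first by rewrite addr0.
by case: h; rewrite IH; lia.
Qed.

Section GentlePaths.
Variable R : rcfType.
Variable alpha : nat -> R[i].
Local Notation C := R[i].

(* Weight of a flat step from an odd point at height y; at y = 0 it is
   -conj(alpha_(-1)) = 1. *)
Definition odd_flat_wt (y : nat) : C := if y is y'.+1 then - (alpha y')^* else 1.

(* [gentle_wt k l y d] is the total weight of the gentle paths with k steps
   from a point (x, y) with x + y = l to height d. *)
Fixpoint gentle_wt (k l y d : nat) : C :=
  match k with
  | 0 => (y == d)%:R
  | k.+1 =>
      if ~~ odd l then gentle_wt k l.+2 y.+1 d + alpha y * gentle_wt k l.+1 y d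
      else (if y is y'.+1 then (1 - `|alpha y'| ^+ 2) * gentle_wt k l y' d else 0)
           + odd_flat_wt y * gentle_wt k l.+1 y d
  end.

Definition paths_wt k (x y d : int) : C :=
  \sum_(t : k.-tuple step | gentle_from x y t && ((endpt x y t).2 == d))
     wtM alpha x y t.

Lemma paths_wtS k x y d : paths_wt k.+1 x y d = \sum_(h : step)
  \sum_(t : k.-tuple step | gentle_from x y (h :: t) && ((endpt x y (h :: t)).2 == d))
     wtM alpha x y (h :: t).
Proof.
rewrite /paths_wt (reindex (fun p : step * k.-tuple step => [tuple of p.1 :: p.2])) /=.
  by rewrite -(pair_big_dep xpredT
    (fun h (t : k.-tuple step) => gentle_from x y (h :: t) && ((endpt x y (h :: t)).2 == d))
    (fun h (t : k.-tuple step) => wtM alpha x y (h :: t))).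
exists (fun u : k.+1.-tuple step => (thead u, [tuple of behead u])) => [[h t] _|u _] /=.
  by rewrite theadE; congr pair; apply/val_inj.
by rewrite [in RHS](tuple_eta u).
Qed.

Lemma paths_wtE k (x : int) (y l d : nat) :
  x + y%:Z = l%:Z -> paths_wt k x y d = gentle_wt k l y d.
Proof.
elim: k x y l => [|k IH] x y l hxy.
  rewrite /paths_wt big_mkcond (big_pred1 [tuple]) /=; last first.
    by move=> t; rewrite [t]tuple0; apply/esym/eqP.
  by rewrite eqz_nat; case: eqP.
have hUp : x + 1 + (y.+1)%:Z = l.+2%:Z by lia.
have hFlat : x + 1 + y%:Z = l.+1%:Z by lia.
rewrite paths_wtS big_step /= hxy (_ : y%:Z + 1 = (y.+1)%:Z); last by rewrite intS addrC.
case: (boolP (odd l)) => ol /=; rewrite -!mulr_sumr big_pred0_eq ?mulr0 ?addr0 ?add0r.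
  rewrite addrC -/(paths_wt k (x + 1) y d) (IH _ _ _ hFlat).
  case: y {hUp hFlat} hxy => [|y] hxy /=.
    by rewrite big_pred0_eq mulr0 !add0r rmorphN1 opprK.
  have hDown : x + 1 + y%:Z = l%:Z by lia.
  rewrite (_ : y.+1%:Z - 1 = y%:Z); last by lia.
  by rewrite subn1 /= -/(paths_wt k (x + 1) y d) (IH _ _ _ hDown).
rewrite -/(paths_wt k (x + 1) y d) -/(paths_wt k (x + 1) y.+1 d).
by rewrite (IH _ _ _ hUp) (IH _ _ _ hFlat).
Qed.

Lemma gentle_wt_vanish k l y d : (k + d < y)%N -> gentle_wt k l y d = 0.
Proof.
elim: k l y => [|k IH] l y hy /=.
  by rewrite (_ : (y == d) = false) //; apply/negbTE/eqP; lia.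
case: (odd l) => /=; last by rewrite !IH ?mulr0 ?addr0 //; lia.
by case: y hy => [|y] hy; [lia | rewrite !IH ?mulr0 ?addr0 //; lia].
Qed.

(* A path from an even point cannot start with a down-step, so it needs more
   than [y - d] steps to reach height [d]. *)
Lemma gentle_wt_even_descent l y d :
  ~~ odd l -> (d < y)%N -> gentle_wt (y - d) l y d = 0.
Proof.
move=> el hdy; rewrite (_ : (y - d = (y - d).-1.+1)%N) /=; last by lia.
by rewrite el !gentle_wt_vanish ?mulr0 ?addr0 //; lia.
Qed.

Lemma gMot_sumE (a c : int) (b d l : nat) : a + b%:Z = l%:Z ->
  gMot_sum alpha a b c d = if a <= c then gentle_wt (absz (c - a)) l b d else 0.
Proof.
move=> hab; rewrite /gMot_sum /gentle le0z_nat /=.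
have endptE (t : seq step) : (endpt a b t == (c, d%:Z)) =
    (a + (size t)%:Z == c) && ((endpt a b t).2 == d).
  by rewrite -(endpt_fst t a b) -xpair_eqE -surjective_pairing.
case: ifP => hac.
  rewrite -(paths_wtE _ _ hab); apply: eq_bigl => t.
  by rewrite endptE size_tuple (_ : a + _ == c) //; apply/eqP; lia.
apply: big_pred0 => t; rewrite endptE size_tuple (_ : a + _ == c = false) ?andbF //.
by apply/negbTE/eqP; lia.
Qed.

End GentlePaths.

Section Szego.
Variable R : rcfType.
Variable alpha : nat -> R[i].
Local Notation C := R[i].

Lemma coef_pstar (f : {poly C}) i :
  (pstar f)`_i = if (i < size f)%N then (f`_((size f).-1 - i))^* else 0.
Proof. exact: coef_poly. Qed.

Lemma pstar1 : pstar 1 = 1 :> {poly C}.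
Proof.
apply/polyP => i; rewrite coef_pstar size_poly1 coef1.
by case: i => [|i]; rewrite ?coef1 //= conjC1.
Qed.

Lemma size_lead_coef_Phi n : size (Phi alpha n) = n.+1 /\ lead_coef (Phi alpha n) = 1.
Proof.
elim: n => [|n [sz ld]] /=; first by rewrite size_poly1 lead_coef1.
have Phi_neq0 : Phi alpha n != 0 by rewrite -size_poly_eq0 sz.
have lt_size :
    (size (- ((alpha n)^* *: pstar (Phi alpha n)))%R < size (Phi alpha n * 'X)%R)%N.
  rewrite size_polyN size_mulX // sz ltnS.
  by apply: leq_trans (size_scale_leq _ _) _; rewrite -sz size_poly.
by rewrite mulrC size_polyDl // lead_coefDl // size_mulX // sz lead_coefMX ld.
Qed.

Lemma size_Phi n : size (Phi alpha n) = n.+1.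
Proof. by case: (size_lead_coef_Phi n). Qed.

Lemma size_pstar_Phi n : (size (pstar (Phi alpha n)) <= n.+1)%N.
Proof. by rewrite -size_Phi size_poly. Qed.

Lemma mulX_Phi n : 'X * Phi alpha n = Phi alpha n.+1 + (alpha n)^* *: pstar (Phi alpha n).
Proof. by rewrite /= subrK. Qed.

Lemma pstar_PhiS n :
  pstar (Phi alpha n.+1) = pstar (Phi alpha n) - alpha n *: ('X * Phi alpha n).
Proof.
apply/polyP => i.
rewrite coef_pstar size_Phi [_.+2.-1]/= [Phi _ n.+1]/= !coefB !coefZ !coefXM.
rewrite !coef_pstar size_Phi [_.+1.-1]/=.
case: i => [|j] /=; first by rewrite subn0 ltnn !mulr0 !subr0 subn0.
rewrite !subSS !ltnS; case: (ltngtP j n) => [hjn|hjn|<-].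
- rewrite leq_subr (subKn (ltnW hjn)) -subnS.
  rewrite (_ : (n - j == 0)%N = false); last by apply/negbTE; rewrite subn_eq0 -ltnNge.
  by rewrite rmorphB rmorphM /= !conjCK.
- by rewrite nth_default ?size_Phi // mulr0 subr0.
- by rewrite subnn eqxx leq0n subn0 !sub0r rmorphN rmorphM /= !conjCK.
Qed.

Lemma pstar_PhiS_Phi n :
  pstar (Phi alpha n.+1) =
  (1 - `|alpha n| ^+ 2) *: pstar (Phi alpha n) - alpha n *: Phi alpha n.+1.
Proof.
rewrite pstar_PhiS mulX_Phi scalerDr scalerA -normCK scalerBl scale1r.
by rewrite opprD addrA addrAC.
Qed.

Lemma Phi_span m (p : {poly C}) : (size p <= m)%N ->
  exists b : nat -> C, p = \sum_(t < m) b t *: Phi alpha t.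
Proof.
elim: m p => [|m IH] p hp.
  by exists (fun=> 0); move: hp; rewrite leqn0 size_poly_eq0 big_ord0 => /eqP.
have top_Phi : (Phi alpha m)`_m = 1.
  by have [sz <-] := size_lead_coef_Phi m; rewrite lead_coefE sz.
set q := p - p`_m *: Phi alpha m.
have size_q : (size q <= m)%N.
  apply/leq_sizeP => i hi; rewrite coefB coefZ.
  case: (ltngtP i m) => [|him|->]; first by rewrite ltnNge hi.
    by rewrite !(nth_default 0 (leq_trans _ him)) ?size_Phi // mulr0 subr0.
  by rewrite top_Phi mulr1 subrr.
have [b eq_q] := IH q size_q.
exists (fun t => if t == m then p`_m else b t).
rewrite big_ord_recr /= eqxx -{1}(subrK (p`_m *: Phi alpha m) p) -/q eq_q.
by congr (_ + _); apply: eq_bigr => t _; rewrite ltn_eqF.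
Qed.

End Szego.

Lemma big_ord_widen0 (V : nmodType) n m (F : nat -> V) :
  (n <= m)%N -> (forall i, (n <= i)%N -> F i = 0) ->
  \sum_(i < n) F i = \sum_(i < m) F i.
Proof.
move=> le_nm F0; rewrite (big_ord_widen m F le_nm) big_mkcond.
by apply: eq_bigr => i _; case: ltnP => // /F0.
Qed.

Section InnerProduct.
Variable R : rcfType.
Variable c : int -> R[i].
Local Notation C := R[i].

Lemma ip_widen A B (f g : {poly C}) : (size f <= A)%N -> (size g <= B)%N ->
  ip c f g = \sum_(i < A) \sum_(j < B) f`_i * (g`_j)^* * c (i%:Z - j%:Z).
Proof.
move=> hf hg; rewrite /ip (big_ord_widen0
  (F := fun i : nat => \sum_(j < size g) f`_i * (g`_j)^* * c (i%:Z - j%:Z)) hf).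
  apply: eq_bigr => i _; rewrite (big_ord_widen0
    (F := fun j : nat => f`_i * (g`_j)^* * c (i%:Z - j%:Z)) hg) // => j hj.
  by rewrite [g`_j]nth_default // conjC0 mulr0 mul0r.
by move=> i hi; apply: big1 => j _; rewrite nth_default // !mul0r.
Qed.

Lemma ipZl a (f g : {poly C}) : ip c (a *: f) g = a * ip c f g.
Proof.
rewrite !(@ip_widen (size f) (size g)) ?size_scale_leq // mulr_sumr.
by apply: eq_bigr => i _; rewrite mulr_sumr; apply: eq_bigr => j _; rewrite coefZ !mulrA.
Qed.

Lemma ipZr a (f g : {poly C}) : ip c f (a *: g) = a^* * ip c f g.
Proof.
rewrite !(@ip_widen (size f) (size g)) ?size_scale_leq // mulr_sumr.
apply: eq_bigr => i _; rewrite mulr_sumr; apply: eq_bigr => j _.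
by rewrite coefZ rmorphM /= mulrCA !mulrA.
Qed.

Lemma ipDl (f1 f2 g : {poly C}) : ip c (f1 + f2) g = ip c f1 g + ip c f2 g.
Proof.
pose A := maxn (size f1) (size f2).
rewrite !(@ip_widen A (size g)) ?leq_maxl ?leq_maxr ?size_polyD // -big_split.
apply: eq_bigr => i _; rewrite -big_split.
by apply: eq_bigr => j _; rewrite coefD !mulrDl.
Qed.

Lemma ipDr (f g1 g2 : {poly C}) : ip c f (g1 + g2) = ip c f g1 + ip c f g2.
Proof.
pose B := maxn (size g1) (size g2).
rewrite !(@ip_widen (size f) B) ?leq_maxl ?leq_maxr ?size_polyD // -big_split.
apply: eq_bigr => i _; rewrite -big_split.
by apply: eq_bigr => j _; rewrite coefD rmorphD /= mulrDr mulrDl.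
Qed.

Lemma ip0l (g : {poly C}) : ip c 0 g = 0.
Proof. by rewrite -(scale0r 0) ipZl mul0r. Qed.

Lemma ip0r (f : {poly C}) : ip c f 0 = 0.
Proof. by rewrite -(scale0r 0) ipZr conjC0 mul0r. Qed.

Lemma ip_suml I (r : seq I) (P : pred I) (F : I -> {poly C}) g :
  ip c (\sum_(i <- r | P i) F i) g = \sum_(i <- r | P i) ip c (F i) g.
Proof. exact: (big_morph (ip c ^~ g) (fun f1 f2 => ipDl f1 f2 g) (ip0l g)). Qed.

Lemma ip_sumr I (r : seq I) (P : pred I) (F : I -> {poly C}) f :
  ip c f (\sum_(i <- r | P i) F i) = \sum_(i <- r | P i) ip c f (F i).
Proof. exact: (big_morph (ip c f) (ipDr f) (ip0r f)). Qed.

Lemma ip_pythagoras (u v : {poly C}) a b : ip c u v = 0 -> ip c v u = 0 ->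
  ip c (a *: u + b *: v) (a *: u + b *: v) = a * a^* * ip c u u + b * b^* * ip c v v.
Proof. by move=> uv vu; rewrite !(ipDl, ipDr, ipZl, ipZr) uv vu; ring. Qed.

Lemma ip_mulX (f g : {poly C}) : ip c ('X * f) ('X * g) = ip c f g.
Proof.
have size_XM (p : {poly C}) : (size ('X * p)%R <= (size p).+1)%N.
  by apply: leq_trans (size_polyMleq _ _) _; rewrite size_polyX.
rewrite (ip_widen (size_XM f) (size_XM g)) (ip_widen (leqnn _) (leqnn _)).
rewrite big_ord_recl big1 ?add0r => [|j _]; last by rewrite coefXM !mul0r.
apply: eq_bigr => i _; rewrite big_ord_recl !lift0 !coefXM /= conjC0 mulr0 mul0r add0r.
by apply: eq_bigr => j _; rewrite /bump leq0n add1n coefXM /=; congr (_ * c _); lia.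
Qed.

End InnerProduct.

Lemma conjC_1_sub_norm2 (R : rcfType) (a : R[i]) : (1 - `|a| ^+ 2)^* = 1 - `|a| ^+ 2.
Proof. by rewrite conj_Creal // rpredB ?rpred1 ?rpredX ?normr_real. Qed.

Lemma one_sub_norm2_neq0 (R : rcfType) (a : R[i]) : `|a| < 1 -> 1 - `|a| ^+ 2 != 0.
Proof. by move=> a_lt1; rewrite subr_eq0 eq_sym lt_eqF // exprn_ilt1. Qed.

Section Orthogonality.
Variable R : rcfType.
Variable alpha : nat -> R[i].
Variable c : int -> R[i].
Local Notation C := R[i].
Hypothesis ip_Phi_orth : forall m n, m <> n -> ip c (Phi alpha m) (Phi alpha n) = 0.

Lemma ip_lowdeg_Phi m (p : {poly C}) : (size p <= m)%N -> ip c p (Phi alpha m) = 0.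
Proof.
case/(@Phi_span _ alpha) => b ->; rewrite ip_suml; apply: big1 => t _.
by rewrite ipZl ip_Phi_orth ?mulr0 // => tm; move: (ltn_ord t); rewrite tm ltnn.
Qed.

Lemma ip_Phi_lowdeg m (p : {poly C}) : (size p <= m)%N -> ip c (Phi alpha m) p = 0.
Proof.
case/(@Phi_span _ alpha) => b ->; rewrite ip_sumr; apply: big1 => t _.
by rewrite ipZr ip_Phi_orth ?mulr0 // => mt; move: (ltn_ord t); rewrite -mt ltnn.
Qed.

Lemma ip_Phi_pstar s : ip c (Phi alpha s.+1) (pstar (Phi alpha s)) = 0.
Proof. exact: ip_Phi_lowdeg (size_pstar_Phi alpha s). Qed.

Lemma ip_pstar_Phi s : ip c (pstar (Phi alpha s)) (Phi alpha s.+1) = 0.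
Proof. exact: ip_lowdeg_Phi (size_pstar_Phi alpha s). Qed.

Lemma ip_Phi_sum s M (b : nat -> C) :
  ip c (Phi alpha s) (\sum_(t < M) b t *: Phi alpha t) =
  if (s < M)%N then (b s)^* * ip c (Phi alpha s) (Phi alpha s) else 0.
Proof.
rewrite ip_sumr; case: ltnP => hs.
  rewrite (bigD1 (Ordinal hs)) //= ipZr big1 ?addr0 // => t /eqP ts.
  by rewrite ipZr ip_Phi_orth ?mulr0 // => st; apply: ts; apply: val_inj.
apply: big1 => t _; rewrite ipZr ip_Phi_orth ?mulr0 // => st.
by move: (ltn_ord t); rewrite -st ltnNge hs.
Qed.

Lemma ip_norm_PhiS s :
  ip c (pstar (Phi alpha s)) (pstar (Phi alpha s)) = ip c (Phi alpha s) (Phi alpha s) ->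
  ip c (Phi alpha s.+1) (Phi alpha s.+1) =
  (1 - `|alpha s| ^+ 2) * ip c (Phi alpha s) (Phi alpha s).
Proof.
move=> norm_pstar; have := ip_mulX c (Phi alpha s) (Phi alpha s).
rewrite mulX_Phi -[Phi alpha s.+1]scale1r.
rewrite (ip_pythagoras _ _ (ip_Phi_pstar s) (ip_pstar_Phi s)).
rewrite norm_pstar conjCK conjC1 mulr1 mul1r normCK scale1r => /(canRL (addrK _)) ->.
ring.
Qed.

Lemma ip_norm_pstar_Phi s :
  ip c (pstar (Phi alpha s)) (pstar (Phi alpha s)) = ip c (Phi alpha s) (Phi alpha s).
Proof.
elim: s => [|s IH]; first by rewrite /= pstar1.
rewrite pstar_PhiS_Phi -scaleNr (ip_pythagoras _ _ (ip_pstar_Phi s) (ip_Phi_pstar s)).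
rewrite IH (ip_norm_PhiS IH) conjC_1_sub_norm2 rmorphN /= normCK.
ring.
Qed.

Lemma ip_norm_Phi s : c 0 = 1 ->
  ip c (Phi alpha s) (Phi alpha s) = \prod_(k < s) (1 - `|alpha k| ^+ 2).
Proof.
move=> c0; elim: s => [|s IH].
  by rewrite /ip size_poly1 !big_ord1 big_ord0 coef1 conjC1 mulr1 mul1r subrr c0.
by rewrite (ip_norm_PhiS (ip_norm_pstar_Phi s)) IH big_ord_recr mulrC.
Qed.

End Orthogonality.

Section LatticeExpansion.
Variable R : rcfType.
Variable alpha : nat -> R[i].
Variable N : nat.
Local Notation C := R[i].

Definition lattice_poly (l y : nat) : {poly C} :=
  'X^(N - uphalf l) * (if odd l then pstar (Phi alpha y) else Phi alpha y).

Lemma lattice_poly_even l y : ~~ odd l -> (l < N.*2)%N ->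
  lattice_poly l y = lattice_poly l.+2 y.+1 + (alpha y)^* *: lattice_poly l.+1 y.
Proof.
move=> el lt_l; rewrite /lattice_poly /= (negbTE el) /=.
have := even_uphalfK el; rewrite uphalf_half (negbTE el) add0n => l_half.
rewrite (_ : (N - l./2 = (N - (l./2).+1).+1)%N); last by lia.
by rewrite exprSr -mulrA scalerAr -mulrDr subrK.
Qed.

Lemma lattice_poly_odd l y : odd l ->
  lattice_poly l y.+1 =
  (1 - `|alpha y| ^+ 2) *: lattice_poly l y - alpha y *: lattice_poly l.+1 y.+1.
Proof.
move=> ol; rewrite /lattice_poly [odd l.+1]/= ol [uphalf l.+1]/= uphalf_half ol.
by rewrite pstar_PhiS_Phi mulrBr !scalerAr.
Qed.

Lemma lattice_poly_odd0 l : odd l -> lattice_poly l 0 = lattice_poly l.+1 0.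
Proof.
by move=> ol; rewrite /lattice_poly [odd l.+1]/= ol [uphalf l.+1]/= uphalf_half ol pstar1.
Qed.

Lemma lattice_poly_origin y : lattice_poly 0 y = 'X^N * Phi alpha y.
Proof. by rewrite /lattice_poly /= subn0. Qed.

Lemma lattice_poly_top y : lattice_poly N.*2 y = Phi alpha y.
Proof. by rewrite /lattice_poly odd_double uphalf_double subnn mul1r. Qed.

Lemma lattice_poly_top_expansion y : lattice_poly N.*2 y =
  \sum_(s < y.+1) (gentle_wt alpha (y - s) N.*2 y s)^* *: Phi alpha s.
Proof.
rewrite lattice_poly_top big_ord_recr /= subnn /= eqxx conjC1 scale1r big1 ?add0r // => s _.
by rewrite gentle_wt_even_descent ?odd_double ?ltn_ord // conjC0 scale0r.
Qed.

Lemma lattice_poly_expansion K l y : (l <= N.*2)%N -> K = (N.*2 - l + y)%N ->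
  lattice_poly l y = \sum_(s < K.+1) (gentle_wt alpha (K - s) l y s)^* *: Phi alpha s.
Proof.
elim: K l y => [|K IH] l y le_l def_K.
  have [-> ->] : l = N.*2 /\ y = 0%N by lia.
  exact: lattice_poly_top_expansion.
have [ge_l | lt_l] := leqP N.*2 l.
  have [-> ->] : l = N.*2 /\ K.+1 = y by lia.
  exact: lattice_poly_top_expansion.
have wt_last : gentle_wt alpha (K.+1 - K.+1) l y K.+1 = 0.
  by rewrite subnn /= (_ : (y == K.+1) = false) //; apply/negbTE/eqP; lia.
rewrite big_ord_recr /= wt_last conjC0 scale0r addr0.
under eq_bigr => s _ do rewrite (subSn (ltn_ord s : (s <= K)%N)).
case: (boolP (odd l)) => ol.
  case: y def_K {wt_last} => [|y] def_K.
    rewrite lattice_poly_odd0 // (IH l.+1 0%N); try lia.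
    by apply: eq_bigr => s _; rewrite /= ol add0r mul1r.
  rewrite lattice_poly_odd // (IH l y) ?(IH l.+1 y.+1); try lia.
  rewrite !scaler_sumr -sumrN -big_split; apply: eq_bigr => s _ /=.
  rewrite ol rmorphD !rmorphM /= conjC_1_sub_norm2 rmorphN /= conjCK !scalerA -scalerBl.
  by rewrite mulNr.
have lt_l1 : (l.+1 < N.*2)%N.
  rewrite ltn_neqAle lt_l andbT; apply/eqP => e.
  by move: (odd_double N); rewrite -e /= ol.
rewrite lattice_poly_even // (IH l.+2 y.+1) ?(IH l.+1 y); try lia.
rewrite scaler_sumr -big_split; apply: eq_bigr => s _ /=.
by rewrite ol rmorphD rmorphM /= scalerDl scalerA.
Qed.

End LatticeExpansion.

Section MomentFormula.
Variable R : rcfType.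
Variable alpha : nat -> R[i].
Variable c : int -> R[i].
Hypothesis alpha_lt1 : forall k, `|alpha k| < 1.
Hypothesis c0 : c 0 = 1.
Hypothesis ip_Phi_orth : forall m n, m <> n -> ip c (Phi alpha m) (Phi alpha n) = 0.

Lemma ip_norm_Phi_neq0 s : ip c (Phi alpha s) (Phi alpha s) != 0.
Proof.
rewrite ip_norm_Phi //; apply/prodf_neq0 => k _.
exact: one_sub_norm2_neq0.
Qed.

Lemma mu_gentle_wt n r s : mu alpha c n r s =
  if (s <= n.*2 + r)%N then gentle_wt alpha (n.*2 + r - s) 0 r s else 0.
Proof.
rewrite /mu -(lattice_poly_origin alpha n r).
rewrite (lattice_poly_expansion alpha (K := n.*2 + r)) ?subn0 //.
rewrite (ip_Phi_sum ip_Phi_orth _ _ (fun t => (gentle_wt alpha (n.*2 + r - t) 0 r t)^*)).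
rewrite ltnS.
by case: ifP; rewrite ?mul0r // conjCK mulfK ?ip_norm_Phi_neq0.
Qed.

End MomentFormula.

Theorem theorem3p7 (R : rcfType) (alpha : nat -> R[i])
  (halpha : forall k, `|alpha k| < 1)
  (c : int -> R[i])
  (hL1 : c 0 = 1)
  (hLorth : forall m n : nat, m <> n ->
     ip c (Phi alpha m) (Phi alpha n) = 0)
  (n r s : nat) :
  mu alpha c n r s
  = gMot_sum alpha (- (r%:Z)) r (2 * n%:Z - s%:Z) s.
Proof.
rewrite (mu_gentle_wt halpha hL1 hLorth) (gMot_sumE alpha _ _ (addNr r%:Z)).
case: leqP => hs.
  by rewrite ifT; [congr gentle_wt | ]; lia.
by rewrite ifF //; apply/negbTE; lia.
Qed.
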